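(* Let $\mathbb W=(W,I,\preccurlyeq,\circ,{}^\sim,{}^-,{}^\neg)$ be a DqRA-frame. Then $(x^\sim)^\neg=(x^\neg)^-$ for all $x\in W$.
   Context: For a set $W$ and $\circ:W\times W\to\mathcal P(W)$, $U\circ V=\bigcup\{a\circ b\mid a\in U,b\in V\}$, $x\circ V=\{x\}\circ V$, $U\circ y=U\circ\{y\}$; superscripts compose left to right, e.g. $x^{\sim\neg}=(x^\sim)^\neg$. A DInFL-frame is a tuple $(W,I,\preccurlyeq,\circ,{}^\sim,{}^-)$ with $I\subseteq W$, $\preccurlyeq$ a partial order, $\circ:W\times W\to\mathcal P(W)$, ${}^\sim,{}^-:W\to W$, such that for all $u,v,x,y,z$: (F1) $x\preccurlyeq y$ iff $y\in I\circ x$ iff $y\in x\circ I$; (F2) $x\preccurlyeq y$, $x\in I$ imply $y\in I$; (F3) $x\preccurlyeq y$, $x\in u\circ v$ imply $y\in u\circ v$; (F4) $(x\circ y)\circ z=x\circ(y\circ z)$; (F5) $z^\sim\in x\circ y$ iff $y^-\in z\circ x$; (F6) $x^{\sim-}\preccurlyeq x$ and $x^{-\sim}\preccurlyeq x$. A DqRA-frame is a tuple $(W,I,\preccurlyeq,\circ,{}^\sim,{}^-,{}^\neg)$ such that $(W,I,\preccurlyeq,\circ,{}^\sim,{}^-)$ is a DInFL-frame and ${}^\neg:W\to W$ satisfies for all $x,y,z$: (F7) $x^{\neg\neg}=x$; (F8) $x\preccurlyeq y$ implies $y^\neg\preccurlyeq x^\neg$; (F9) $z^-\in x\circ y$ iff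 $z^\neg\in y^{\sim\neg}\circ x^{\sim\neg}$. *)

(* Sets of worlds are represented as predicates W -> Prop;
   the ternary relation  x ∘ y  : W -> W -> (W -> Prop). *)
Set Implicit Arguments.

Definition setcomp {W : Type} (c : W -> W -> W -> Prop) (U V : W -> Prop) : W -> Prop :=
  fun z => exists a b, U a /\ V b /\ c a b z.

Definition sing {W : Type} (x : W) : W -> Prop := fun y => y = x.

Record DInFL_frame (W : Type) (I : W -> Prop) (le : W -> W -> Prop)
    (c : W -> W -> W -> Prop) (tl mi : W -> W) : Prop := {
  po_refl : forall x, le x x;
  po_antisym : forall x y, le x y -> le y x -> x = y;
  po_trans : forall x y z, le x y -> le y z -> le x z;
  F1a : forall x y, le x y <-> setcomp c I (sing x) y;
  F1b : forall x y, le x y <-> setcomp c (sing x) I y;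
  F2 : forall x y, le x y -> I x -> I y;
  F3 : forall x y u v, le x y -> c u v x -> c u v y;
  F4 : forall x y z w,
      setcomp c (setcomp c (sing x) (sing y)) (sing z) w <->
      setcomp c (sing x) (setcomp c (sing y) (sing z)) w;
  F5 : forall x y z, c x y (tl z) <-> c z x (mi y);
  F6a : forall x, le (mi (tl x)) x;
  F6b : forall x, le (tl (mi x)) x
}.

Record DqRA_frame (W : Type) (I : W -> Prop) (le : W -> W -> Prop)
    (c : W -> W -> W -> Prop) (tl mi ng : W -> W) : Prop := {
  dq_base : DInFL_frame I le c tl mi;
  F7 : forall x, ng (ng x) = x;
  F8 : forall x y, le x y -> le (ng y) (ng x);
  F9 : forall x y z, c x y (mi z) <-> c (ng (tl y)) (ng (tl x)) (ng z)
}.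

From Stdlib Require Import Setoid.

Set Implicit Arguments.

(* The map [T x := (x^~)^¬] is monotone (composite of two antitone maps) and,
   combining F5 with F9, satisfies the adjunction-like law
   [T b <= (T a)^- <-> b <= a^~].  Instantiating [a] suitably yields
   [T (T b) = b]; then [(x^¬)^- = (T (T x))^¬- = ((T x)^~)^- = T x]. *)

Section DqRAFrame.
Variables (W : Type) (I : W -> Prop) (le : W -> W -> Prop)
    (c : W -> W -> W -> Prop) (tl mi ng : W -> W).
Hypothesis H : DqRA_frame I le c tl mi ng.

Let B := dq_base H.

Lemma le_iff_unit_left x y : le x y <-> exists e, I e /\ c e x y.
Proof.
  rewrite (F1a B); unfold setcomp, sing; split.
  - intros (a & b & Ha & -> & Hc); eauto.
  - intros (e & He & Hc); eauto.
Qed.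

Lemma le_iff_unit_right x y : le x y <-> exists e, I e /\ c x e y.
Proof.
  rewrite (F1b B); unfold setcomp, sing; split.
  - intros (a & b & -> & Hb & Hc); eauto.
  - intros (e & He & Hc); eauto.
Qed.

Lemma le_tl_iff_le_mi y z : le y (tl z) <-> le z (mi y).
Proof.
  rewrite le_iff_unit_left, le_iff_unit_right.
  split; intros (e & He & Hc); exists e; split; auto; apply (F5 B); auto.
Qed.

Lemma mi_tl z : mi (tl z) = z.
Proof. apply (po_antisym B); [apply (F6a B) | apply le_tl_iff_le_mi, (po_refl B)]. Qed.

Lemma tl_mi y : tl (mi y) = y.
Proof. apply (po_antisym B); [apply (F6b B) | apply le_tl_iff_le_mi, (po_refl B)]. Qed.

Lemma le_mi_anti p q : le p q <-> le (mi q) (mi p).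
Proof. rewrite <- (tl_mi q) at 1; apply le_tl_iff_le_mi. Qed.

Lemma le_tl_anti p q : le p q -> le (tl q) (tl p).
Proof. intro Hpq; apply le_mi_anti; rewrite !mi_tl; exact Hpq. Qed.

Lemma le_ng_anti p q : le p q <-> le (ng q) (ng p).
Proof.
  split; [apply (F8 H) |].
  intro Hqp; apply (F8 H) in Hqp; rewrite !(F7 H) in Hqp; exact Hqp.
Qed.

Lemma le_ng_tl_mono p q : le p q -> le (ng (tl p)) (ng (tl q)).
Proof. intro Hpq; apply le_ng_anti; rewrite !(F7 H); apply le_tl_anti, Hpq. Qed.

Lemma le_iff_ng_tl_unit b q : le b q <-> exists e, I e /\ c b (ng (tl e)) q.
Proof.
  rewrite le_ng_anti, le_mi_anti, le_iff_unit_left.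
  split; intros (e & He & Hc); exists e; split; auto.
  - apply (F9 H) in Hc; rewrite tl_mi, !(F7 H) in Hc; exact Hc.
  - apply (F9 H); rewrite tl_mi, !(F7 H); exact Hc.
Qed.

Lemma le_mi_iff_unit a y : le a (mi y) <-> exists e, I e /\ c a y (tl e).
Proof.
  rewrite le_iff_unit_left.
  split; intros (e & He & Hc); exists e; split; auto; apply (F5 B); auto.
Qed.

Lemma le_ng_tl_mi_iff b a :
  le (ng (tl b)) (mi (ng (tl a))) <-> le b (tl a).
Proof.
  rewrite le_mi_iff_unit, le_iff_ng_tl_unit.
  split; intros (e & He & Hc); exists e; split; auto;
    pose proof (F9 H a b (ng (tl e))) as F9e; rewrite (F7 H) in F9e.
  - apply (F5 B), F9e, Hc.
  - apply F9e, (F5 B), Hc.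
Qed.

Lemma ng_tl_le_mi_ng b : le (ng (tl b)) (mi (ng b)).
Proof.
  pose proof (proj2 (le_ng_tl_mi_iff b (mi b))) as Hb.
  rewrite tl_mi in Hb; apply Hb, (po_refl B).
Qed.

Lemma ng_tl_involutive b : ng (tl (ng (tl b))) = b.
Proof.
  apply (po_antisym B).
  - pose proof (le_ng_tl_mono (ng_tl_le_mi_ng b)) as Hb.
    rewrite tl_mi, (F7 H) in Hb; exact Hb.
  - set (a := mi (ng (tl (ng (tl b))))).
    assert (Hb : le b (tl a)).
    { apply le_ng_tl_mi_iff; unfold a; rewrite tl_mi, (F7 H), mi_tl.
      apply (po_refl B). }
    apply le_tl_iff_le_mi, le_mi_anti in Hb; exact Hb.
Qed.

End DqRAFrame.

Theorem mainTheorem8 (W : Type) (I : W -> Prop) (le : W -> W -> Prop)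
    (c : W -> W -> W -> Prop) (tl mi ng : W -> W)
    (H : DqRA_frame I le c tl mi ng) :
  forall x : W, ng (tl x) = mi (ng x).
Proof.
  intro x.
  rewrite <- (ng_tl_involutive H x) at 2.
  rewrite (F7 H), (mi_tl H); reflexivity.
Qed.
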